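(* Let $\{\mathcal G,(\Gamma_0,\Gamma_1),(\widetilde\Gamma_0,\widetilde\Gamma_1)\}$ be a triple for the adjoint pair $\{S,\widetilde S\}$ satisfying (G), (D), (M), with $\rho(A_0)\neq\emptyset$, $\gamma$-fields $\gamma,\widetilde\gamma$ and Weyl functions $M,\widetilde M$. Let $B_1,B_2,B_1',B_2'$ be linear operators in $\mathcal G$ such that $(B_1B_2\varphi,\psi)=(\varphi,B_1'B_2'\psi)$ for all $\varphi\in\operatorname{dom}(B_1B_2)$, $\psi\in\operatorname{dom}(B_1'B_2')$. Suppose there is $\lambda\in\rho(A_0)$ such that for every $f\in\mathfrak H$: $\widetilde\gamma(\overline\lambda)^*f\in\operatorname{dom}B_2$ and $B_2\widetilde\gamma(\overline\lambda)^*f\in\operatorname{ran}(I-B_2M(\lambda)B_1)$; and for every $g\in\mathfrak H$: $\gamma(\lambda)^*g\in\operatorname{dom}B_2'$ and $B_2'\gamma(\lambda)^*g\in\operatorname{ran}(I-B_2'\widetilde M(\overline\lambda)B_1')$. Then $A_{B_1B_2}=(\widetilde A_{B_1'B_2'})^*$; in particular $A_{B_1B_2}$ is a closed operator in $\mathfrak H$ with $\lambda\in\rho(A_{B_1B_2})$.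
   Context: Let $\mathfrak H$ be a separable Hilbert space. An adjoint pair $\{S,\widetilde S\}$ consists of densely defined closed operators $S,\widetilde S$ in $\mathfrak H$ with $(Sf,g)=(f,\widetilde Sg)$ for all $f\in\operatorname{dom}S$, $g\in\operatorname{dom}\widetilde S$. Fix operators $T\subset S^*$ and $\widetilde T\subset\widetilde S^*$ which are cores, i.e. $\overline T=S^*$ and $\overline{\widetilde T}=\widetilde S^*$. A triple $\{\mathcal G,(\Gamma_0,\Gamma_1),(\widetilde\Gamma_0,\widetilde\Gamma_1)\}$ for $\{S,\widetilde S\}$ consists of a Hilbert space $\mathcal G$ and linear maps $\Gamma_0,\Gamma_1:\operatorname{dom}T\to\mathcal G$, $\widetilde\Gamma_0,\widetilde\Gamma_1:\operatorname{dom}\widetilde T\to\mathcal G$. Put $A_0:=T\upharpoonright\ker\Gamma_0$ and $\widetilde A_0:=\widetilde T\upharpoonright\ker\widetilde\Gamma_0$. Conditions: (G) $(Tf,g)_{\mathfrak H}-(f,\widetilde Tg)_{\mathfrak H}=(\Gamma_1f,\widetilde\Gamma_0g)_{\mathcal G}-(\Gamma_0f,\widetilde\Gamma_1g)_{\mathcal G}$ for all $f\in\operatorname{dom}T$, $g\in\operatorname{dom}\widetilde T$; (D) $\operatorname{ran}\Gamma_0$ and $\operatorname{ran}\widetilde\Gamma_0$ are dense in $\mathcal G$; (M) $A_0^*=\widetilde A_0$ and $\widetilde A_0^*=A_0$ (so $\lambda\in\rho(A_0)$ iff $\overline\lambda\in\rho(\widetilde A_0)$). For $\lambda\in\rho(A_0)$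 one has $\operatorname{dom}T=\ker\Gamma_0\dotplus\ker(T-\lambda)$, so $\Gamma_0\upharpoonright\ker(T-\lambda)$ is injective; similarly for $\widetilde T$. The $\gamma$-fields are $\gamma(\lambda):=(\Gamma_0\upharpoonright\ker(T-\lambda))^{-1}$, $\widetilde\gamma(\mu):=(\widetilde\Gamma_0\upharpoonright\ker(\widetilde T-\mu))^{-1}$; the Weyl functions are $M(\lambda):=\Gamma_1\gamma(\lambda)$, $\lambda\in\rho(A_0)$, and $\widetilde M(\mu):=\widetilde\Gamma_1\widetilde\gamma(\mu)$, $\mu\in\rho(\widetilde A_0)$. Products of operators have their natural domains, e.g. $\operatorname{dom}(B_1B_2)=\{\varphi\in\operatorname{dom}B_2:B_2\varphi\in\operatorname{dom}B_1\}$. Define $A_{B_1B_2}f:=Tf$ on $\operatorname{dom}A_{B_1B_2}:=\{f\in\operatorname{dom}T:\Gamma_1f\in\operatorname{dom}(B_1B_2),\ B_1B_2\Gamma_1f=\Gamma_0f\}$ and $\widetilde A_{B_1'B_2'}g:=\widetilde Tg$ on $\operatorname{dom}\widetilde A_{B_1'B_2'}:=\{g\in\operatorname{dom}\widetilde T:\widetilde\Gamma_1g\in\operatorname{dom}(B_1'B_2'),\ B_1'B_2'\widetilde\Gamma_1g=\widetilde\Gamma_0g\}$. The resolvent set $\rho(A)$ consists of $\lambda$ such that $A-\lambda$ is bijective onto $\mathfrak H$ with bounded inverse. *)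

(* Hilbert spaces are lmodType R[i] equipped with an inner product [ip]
   (linear in the first, conjugate linear in the second argument).
   (Possibly unbounded, possibly multivalued) operators are represented
   by their graphs, i.e. relations  X -> Y -> Prop. *)
From mathcomp Require Import all_boot all_algebra.
From mathcomp Require Import reals.
From mathcomp.real_closed Require Import complex.
Import GRing.Theory Num.Theory.

Set Implicit Arguments.
Unset Strict Implicit.
Unset Printing Implicit Defensive.

Local Open Scope ring_scope.

Section Defs.
Variable R : realType.
Local Notation C := R[i].

Definition is_inner_product (V : lmodType C) (ip : V -> V -> C) : Prop :=
  [/\ (forall (a : C) (x y z : V), ip (a *: x + y) z = a * ip x z + ip y z),
      (forall x y : V, ip x y = (ip y x)^*),
      (forall x : V, 0 <= ip x x) &
      (forall x : V, ip x x = 0 -> x = 0)].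

Definition hnorm (V : lmodType C) (ip : V -> V -> C) (x : V) : C :=
  sqrtC (ip x x).

Definition converges (V : lmodType C) (ip : V -> V -> C)
    (u : nat -> V) (x : V) : Prop :=
  forall e : C, 0 < e -> exists N : nat, forall n : nat,
    (N <= n)%N -> hnorm ip (u n - x) < e.

Definition cauchy_seq (V : lmodType C) (ip : V -> V -> C) (u : nat -> V) : Prop :=
  forall e : C, 0 < e -> exists N : nat, forall m n : nat,
    (N <= m)%N -> (N <= n)%N -> hnorm ip (u m - u n) < e.

Definition is_hilbert (V : lmodType C) (ip : V -> V -> C) : Prop :=
  is_inner_product ip /\
  (forall u : nat -> V, cauchy_seq ip u -> exists x, converges ip u x).

Definition dense (V : lmodType C) (ip : V -> V -> C) (D : V -> Prop) : Prop :=
  forall (x : V) (e : C), 0 < e -> exists y, D y /\ hnorm ip (x - y) < e.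

Definition separable (V : lmodType C) (ip : V -> V -> C) : Prop :=
  exists d : nat -> V, dense ip (fun y => exists n, y = d n).

Definition oprel (X Y : Type) := X -> Y -> Prop.

Definition dom (X Y : Type) (A : oprel X Y) (x : X) : Prop := exists y, A x y.
Definition ran (X Y : Type) (A : oprel X Y) (y : Y) : Prop := exists x, A x y.

Definition op_sub (X Y : Type) (A B : oprel X Y) : Prop :=
  forall x y, A x y -> B x y.
Definition releq (X Y : Type) (A B : oprel X Y) : Prop :=
  forall x y, A x y <-> B x y.

Definition single_valued (X Y : Type) (A : oprel X Y) : Prop :=
  forall x y1 y2, A x y1 -> A x y2 -> y1 = y2.

Definition linear_op (X Y : lmodType C) (A : oprel X Y) : Prop :=
  [/\ single_valued A, A 0 0 &
      (forall (a : C) x1 y1 x2 y2, A x1 y1 -> A x2 y2 ->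
         A (a *: x1 + x2) (a *: y1 + y2))].

Definition rcomp (X Y Z : Type) (B : oprel Y Z) (A : oprel X Y) : oprel X Z :=
  fun x z => exists y, A x y /\ B y z.

Definition id_minus (X : lmodType C) (A : oprel X X) : oprel X X :=
  fun x y => exists z, A x z /\ y = x - z.

(* adjoint (relation); for densely defined A it is the usual adjoint
   operator:  A^* y = z  iff  (A x, y) = (x, z) for all x in dom A *)
Definition adjoint (X Y : lmodType C) (ipX : X -> X -> C) (ipY : Y -> Y -> C)
    (A : oprel X Y) : oprel Y X :=
  fun y z => forall x w, A x w -> ipY w y = ipX x z.

Definition rclosure (X Y : lmodType C) (ipX : X -> X -> C) (ipY : Y -> Y -> C)
    (A : oprel X Y) : oprel X Y :=
  fun x y => exists (u : nat -> X) (v : nat -> Y),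
    (forall n, A (u n) (v n)) /\ converges ipX u x /\ converges ipY v y.

Definition closed_op (X Y : lmodType C) (ipX : X -> X -> C) (ipY : Y -> Y -> C)
    (A : oprel X Y) : Prop :=
  forall (u : nat -> X) (v : nat -> Y) x y,
    (forall n, A (u n) (v n)) -> converges ipX u x -> converges ipY v y -> A x y.

Definition in_resolvent (X : lmodType C) (ip : X -> X -> C) (A : oprel X X)
    (l : C) : Prop :=
  [/\ single_valued A,
      (forall h, exists x y, A x y /\ y - l *: x = h),
      (forall x1 y1 x2 y2, A x1 y1 -> A x2 y2 ->
          y1 - l *: x1 = y2 - l *: x2 -> x1 = x2) &
      (exists c : C, forall x y, A x y -> hnorm ip x <= c * hnorm ip (y - l *: x))].

(* A_0 := T restricted to ker Gamma_0 *)
Definition restr_ker (H G : lmodType C) (T : oprel H H) (Gam0 : H -> G) : oprel H H :=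
  fun f y => T f y /\ Gam0 f = 0.

(* gamma(l) := (Gamma_0 restricted to ker (T - l))^{-1}, as a graph G -> H *)
Definition gamma_field (H G : lmodType C) (T : oprel H H) (Gam0 : H -> G)
    (l : C) : oprel G H :=
  fun phi f => T f (l *: f) /\ Gam0 f = phi.

Definition weyl (H G : lmodType C) (T : oprel H H) (Gam0 Gam1 : H -> G)
    (l : C) : oprel G G :=
  fun phi psi => exists f, gamma_field T Gam0 l phi f /\ psi = Gam1 f.

(* A_{B1 B2} f := T f on { f in dom T | Gamma_1 f in dom (B1 B2),
                                       B1 B2 Gamma_1 f = Gamma_0 f } *)
Definition ext_op (H G : lmodType C) (T : oprel H H) (Gam0 Gam1 : H -> G)
    (B1 B2 : oprel G G) : oprel H H :=
  fun f y => T f y /\ rcomp B1 B2 (Gam1 f) (Gam0 f).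

Definition linear_on (H G : lmodType C) (D : H -> Prop) (F : H -> G) : Prop :=
  forall (a : C) x y, D x -> D y -> F (a *: x + y) = a *: F x + F y.

End Defs.

(* Write [A] for [A_{B1 B2}] and [A~] for [A~_{B1' B2'}].  Green's identity (G)
   and the symmetry of [B1 B2] against [B1' B2'] make them formally adjoint:
   [(A f, g) = (f, A~ g)].  The hypotheses on [lambda] make [A - lambda] onto:
   solve the unperturbed problem with [(A_0 - lambda)^-1 h] and correct it by
   [gamma(lambda) B1 psi], where [psi] comes from the range condition on
   [I - B2 M(lambda) B1] and [gamma~(conj lambda)^* = Gamma_1 (A_0 - lambda)^-1].
   Symmetrically [A~ - conj lambda] is onto; here [A~_0 - conj lambda] is onto
   because it is [(A_0 - lambda)^*], which is bounded below (so has closed range)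
   and has kernel-free adjoint [A_0 - lambda] (so has dense range).  Two formally
   adjoint operators with [A - lambda] and [A~ - conj lambda] onto satisfy
   [A = A~^*]; so [A] is closed, [A - lambda] is injective, and its inverse is
   bounded by the uniform boundedness principle. *)

From mathcomp Require Import all_boot all_order all_algebra.
From mathcomp Require Import reals classical_sets.
From mathcomp.real_closed Require Import complex.
From mathcomp Require Import ring lra.
From mathcomp Require Import boolp.
From Stdlib Require Import Classical.
Import GRing.Theory Num.Theory Order.TTheory.

Set Implicit Arguments.
Unset Strict Implicit.
Unset Printing Implicit Defensive.

Local Open Scope ring_scope.
Local Notation "x %:C" := (real_complex _ x) (format "x %:C").

Section ComplexModulus.
Variable R : realType.
Implicit Types (r s : R) (z w : R[i]).

Lemma complex_ge0_real z : 0 <= z -> z = (complex.Re z)%:C.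
Proof. by case: z => a b; rewrite lecE /= => /andP[/eqP -> _]. Qed.

Lemma real_complexI : injective (fun r : R => r%:C).
Proof. exact: complexI. Qed.

(* The generic [rmorph*] lemmas produce [%:C] at the [rcfType] instance of [R],
   which does not match [%:C] at its [realType] instance in rewrite patterns. *)
Lemma real_complexB r s : (r - s)%:C = r%:C - s%:C.
Proof. exact: rmorphB. Qed.
Lemma real_complexM r s : (r * s)%:C = r%:C * s%:C.
Proof. exact: rmorphM. Qed.
Lemma real_complexV r : (r^-1)%:C = r%:C^-1.
Proof. exact: fmorphV. Qed.
Lemma real_complexX r n : (r ^+ n)%:C = r%:C ^+ n.
Proof. exact: rmorphXn. Qed.

Lemma sqrtC_of_real r : 0 <= r -> sqrtC r%:C = (Num.sqrt r)%:C.
Proof.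
move=> r0; rewrite -{1}(sqr_sqrtr r0) rmorphXn sqrCK //.
by rewrite ler0c sqrtr_ge0.
Qed.

(* The modulus as a real number; [`|z|] itself lives in [R[i]]. *)
Definition cmod z : R := complex.Re `|z|.

Lemma cmodE z : `|z| = (cmod z)%:C.
Proof. exact/complex_ge0_real/normr_ge0. Qed.

Lemma cmod_ge0 z : 0 <= cmod z.
Proof. by rewrite -ler0c -cmodE. Qed.

Lemma cmodD z w : cmod (z + w) <= cmod z + cmod w.
Proof. by rewrite -lecR rmorphD -!cmodE ler_normD. Qed.

Lemma cmodM z w : cmod (z * w) = cmod z * cmod w.
Proof. by apply: complexI; rewrite rmorphM -!cmodE normrM. Qed.

Lemma cmodN z : cmod (- z) = cmod z.
Proof. by rewrite /cmod normrN. Qed.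

Lemma cmodJ z : cmod z^* = cmod z.
Proof. by rewrite /cmod norm_conjC. Qed.

Lemma cmod_real r : 0 <= r -> cmod r%:C = r.
Proof. by move=> r0; rewrite /cmod ger0_norm // ler0c. Qed.

Lemma cmod_nat n : cmod n%:R = n%:R.
Proof. by rewrite -(rmorph_nat (real_complex R)) cmod_real ?ler0n. Qed.

Lemma cmod_eq0 z : cmod z = 0 -> z = 0.
Proof. by move=> h; apply/eqP; rewrite -normr_eq0 cmodE h. Qed.

Lemma Re_le_cmod z : complex.Re z <= cmod z.
Proof.
have := normc_ge_Re z; rewrite cmodE lecR => h.
exact: le_trans (ler_norm _) h.
Qed.

Lemma ReD z w : complex.Re (z + w) = complex.Re z + complex.Re w.
Proof. by case: z => ? ?; case: w. Qed.

Lemma ReN z : complex.Re (- z) = - complex.Re z.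
Proof. by case: z. Qed.

Lemma cmod_small_eq0 z : (forall e : R, 0 < e -> cmod z < e) -> z = 0.
Proof.
move=> h; apply: cmod_eq0; apply/eqP; rewrite eq_le cmod_ge0 andbT.
by rewrite leNgt; apply/negP => /h; rewrite ltxx.
Qed.

Lemma gt0_complex_real (e : R[i]) :
  0 < e -> e = (complex.Re e)%:C /\ 0 < complex.Re e.
Proof.
move=> h; split; first exact/complex_ge0_real/ltW.
by move: h; case: e => a b; rewrite ltcE /= => /andP[].
Qed.

Lemma real_complex_gt0 r : 0 < r -> 0 < r%:C :> R[i].
Proof. by move=> h; rewrite ltcE /= eqxx h. Qed.

End ComplexModulus.

Section InnerProduct.
Variable R : realType.
Variable V : lmodType R[i].
Variable ip : V -> V -> R[i].
Hypothesis ip_inner : is_inner_product ip.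
Implicit Types (x y z : V) (a : R[i]).

Lemma ipDZl a x y z : ip (a *: x + y) z = a * ip x z + ip y z.
Proof. by case: ip_inner. Qed.
Lemma ipC x y : ip x y = (ip y x)^*.
Proof. by case: ip_inner. Qed.
Lemma ipxx_ge0 x : 0 <= ip x x.
Proof. by case: ip_inner. Qed.
Lemma ipxx_eq0 x : ip x x = 0 -> x = 0.
Proof. by case: ip_inner => _ _ _; apply. Qed.

Lemma ip0l y : ip 0 y = 0.
Proof.
have := ipDZl 1 0 0 y; rewrite scaler0 addr0 mul1r => /eqP.
by rewrite -subr_eq subrr eq_sym => /eqP.
Qed.
Lemma ipDl x y z : ip (x + y) z = ip x z + ip y z.
Proof. by rewrite -(scale1r x) ipDZl mul1r scale1r. Qed.
Lemma ipZl a x z : ip (a *: x) z = a * ip x z.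
Proof. by rewrite -(addr0 (a *: x)) ipDZl ip0l addr0. Qed.
Lemma ipNl x z : ip (- x) z = - ip x z.
Proof. by rewrite -scaleN1r ipZl mulN1r. Qed.
Lemma ipBl x y z : ip (x - y) z = ip x z - ip y z.
Proof. by rewrite ipDl ipNl. Qed.
Lemma ip0r y : ip y 0 = 0.
Proof. by rewrite ipC ip0l conjC0. Qed.
Lemma ipDr x y z : ip z (x + y) = ip z x + ip z y.
Proof. by rewrite ipC ipDl rmorphD (ipC z x) (ipC z y). Qed.
Lemma ipZr a x z : ip z (a *: x) = a^* * ip z x.
Proof. by rewrite ipC ipZl rmorphM (ipC z x). Qed.
Lemma ipNr x z : ip z (- x) = - ip z x.
Proof. by rewrite ipC ipNl rmorphN (ipC z x). Qed.
Lemma ipBr x y z : ip z (x - y) = ip z x - ip z y.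
Proof. by rewrite ipDr ipNr. Qed.

Definition sqnorm x : R := complex.Re (ip x x).
Definition rnorm x : R := Num.sqrt (sqnorm x).

Lemma ipxxE x : ip x x = (sqnorm x)%:C.
Proof. exact/complex_ge0_real/ipxx_ge0. Qed.
Lemma sqnorm_ge0 x : 0 <= sqnorm x.
Proof. by rewrite -ler0c -ipxxE ipxx_ge0. Qed.
Lemma sqnorm_eq0 x : sqnorm x = 0 -> x = 0.
Proof. by move=> h; apply: ipxx_eq0; rewrite ipxxE h. Qed.
Lemma sqnorm_gt0 x : x != 0 -> 0 < sqnorm x.
Proof.
move=> x0; rewrite lt0r sqnorm_ge0 andbT.
by apply: contra x0 => /eqP /sqnorm_eq0 ->.
Qed.
Lemma cmod_ipxx x : cmod (ip x x) = sqnorm x.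
Proof. by rewrite ipxxE cmod_real ?sqnorm_ge0. Qed.

Lemma rnorm_ge0 x : 0 <= rnorm x.
Proof. exact: sqrtr_ge0. Qed.
Lemma rnorm_sqr x : rnorm x ^+ 2 = sqnorm x.
Proof. exact/sqr_sqrtr/sqnorm_ge0. Qed.
Lemma hnormE x : hnorm ip x = (rnorm x)%:C.
Proof. by rewrite /hnorm ipxxE sqrtC_of_real ?sqnorm_ge0. Qed.
Lemma rnorm_eq0 x : rnorm x = 0 -> x = 0.
Proof. by move=> h; apply: sqnorm_eq0; rewrite -rnorm_sqr h expr0n. Qed.
Lemma rnorm_gt0 x : x != 0 -> 0 < rnorm x.
Proof. by move=> /sqnorm_gt0; rewrite sqrtr_gt0. Qed.
Lemma rnorm0 : rnorm 0 = 0.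
Proof. by rewrite /rnorm /sqnorm ip0l sqrtr0. Qed.

Lemma sqnormD x y :
  sqnorm (x + y) = sqnorm x + sqnorm y + complex.Re (ip x y) + complex.Re (ip y x).
Proof. by rewrite /sqnorm ipDl !ipDr !ReD; ring. Qed.
Lemma sqnormN x : sqnorm (- x) = sqnorm x.
Proof. by rewrite /sqnorm ipNl ipNr opprK. Qed.
Lemma sqnormZ a x : sqnorm (a *: x) = cmod a ^+ 2 * sqnorm x.
Proof.
rewrite /sqnorm ipZl ipZr mulrA -normCK cmodE ipxxE -rmorphXn -rmorphM.
by [].
Qed.

Lemma parallelogram x y :
  sqnorm (x + y) + sqnorm (x - y) = 2 * sqnorm x + 2 * sqnorm y.
Proof. by rewrite !sqnormD sqnormN ipNr ipNl !ReN; ring. Qed.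

(* Pythagoras for the component of [x] orthogonal to [y]. *)
Lemma sqnorm_sub_proj x y : y != 0 ->
  sqnorm (x - (ip x y / ip y y) *: y) = sqnorm x - cmod (ip x y) ^+ 2 / sqnorm y.
Proof.
move=> y0; apply: real_complexI.
set p := ip x y; set q := ip y y.
have q0 : q != 0 by apply: contra y0 => /eqP /ipxx_eq0 ->.
have qJ : q^* = q by rewrite /q ipxxE; exact: conjc_real.
have pqJ : (p / q)^* = p^* / q.
  by rewrite rmorphM fmorphV; congr (_ * _); congr (_^-1); exact: qJ.
rewrite -ipxxE ipBl !ipBr !ipZl !ipZr (ipC y x) -/p -/q pqJ.
rewrite real_complexB real_complexM real_complexV real_complexX -cmodE normCK.
rewrite -!ipxxE -/q.
by field.
Qed.

Lemma cauchy_schwarz x y : cmod (ip x y) <= rnorm x * rnorm y.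
Proof.
have sq : cmod (ip x y) ^+ 2 <= sqnorm x * sqnorm y.
  have [->|y0] := eqVneq y 0.
    by rewrite ip0r /cmod normr0 expr0n /sqnorm ip0l mulr0.
  have := sqnorm_ge0 (x - (ip x y / ip y y) *: y).
  by rewrite sqnorm_sub_proj // subr_ge0 ler_pdivrMr ?sqnorm_gt0.
rewrite /rnorm -sqrtrM ?sqnorm_ge0 // -(ger0_norm (cmod_ge0 (ip x y))) -sqrtr_sqr.
by rewrite ler_sqrt // mulr_ge0 ?sqnorm_ge0.
Qed.

Lemma rnormD x y : rnorm (x + y) <= rnorm x + rnorm y.
Proof.
have h1 := Re_le_cmod (ip x y); have h3 := cauchy_schwarz x y.
have h2 : complex.Re (ip y x) <= cmod (ip x y).
  by rewrite (ipC x y) cmodJ Re_le_cmod.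
have e : sqnorm (x + y) <= (rnorm x + rnorm y) ^+ 2.
  by rewrite sqnormD sqrrD !rnorm_sqr; lra.
rewrite /rnorm -(ger0_norm (addr_ge0 (rnorm_ge0 x) (rnorm_ge0 y))) -sqrtr_sqr.
by rewrite ler_sqrt // sqr_ge0.
Qed.
Lemma rnormN x : rnorm (- x) = rnorm x.
Proof. by rewrite /rnorm sqnormN. Qed.
Lemma rnorm_distC x y : rnorm (x - y) = rnorm (y - x).
Proof. by rewrite -rnormN opprB. Qed.
Lemma rnorm_distD x y z : rnorm (x - z) <= rnorm (x - y) + rnorm (y - z).
Proof. by rewrite -[x - z](subrKA y) rnormD. Qed.
Lemma rnormZ a x : rnorm (a *: x) = cmod a * rnorm x.
Proof.
by rewrite /rnorm sqnormZ sqrtrM ?sqr_ge0 // sqrtr_sqr ger0_norm ?cmod_ge0.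
Qed.

End InnerProduct.

Section Convergence.
Variable R : realType.
Variable V : lmodType R[i].
Variable ip : V -> V -> R[i].
Hypothesis ip_inner : is_inner_product ip.
Implicit Types (x y : V) (u v : nat -> V).
Local Notation rnorm := (rnorm ip).

Definition conv u x := forall e : R, 0 < e ->
  exists N, forall n, (N <= n)%N -> rnorm (u n - x) < e.
Definition cauchy u := forall e : R, 0 < e ->
  exists N, forall m n, (N <= m)%N -> (N <= n)%N -> rnorm (u m - u n) < e.

Lemma convergesP u x : converges ip u x <-> conv u x.
Proof.
split=> h e e0.
- have [N HN] := h _ (real_complex_gt0 e0); exists N => n /HN.
  by rewrite hnormE // ltcR.
- have [-> e0'] := gt0_complex_real e0; have [N HN] := h _ e0'; exists N => n /HN.
  by rewrite hnormE // ltcR.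
Qed.

Lemma cauchy_seqP u : cauchy_seq ip u <-> cauchy u.
Proof.
split=> h e e0.
- have [N HN] := h _ (real_complex_gt0 e0); exists N => m n hm hn.
  by have := HN m n hm hn; rewrite hnormE // ltcR.
- have [-> e0'] := gt0_complex_real e0; have [N HN] := h _ e0'.
  by exists N => m n hm hn; rewrite hnormE // ltcR; apply: HN.
Qed.

Lemma denseP (D : V -> Prop) : dense ip D <->
  (forall x (e : R), 0 < e -> exists y, D y /\ rnorm (x - y) < e).
Proof.
split=> h x e e0.
- have [y [Dy Hy]] := h x _ (real_complex_gt0 e0); exists y; split=> //.
  by move: Hy; rewrite hnormE // ltcR.
- have [-> e0'] := gt0_complex_real e0; have [y [Dy Hy]] := h x _ e0'.
  by exists y; split=> //; rewrite hnormE // ltcR.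
Qed.

Lemma conv_cauchy u x : conv u x -> cauchy u.
Proof.
move=> cu e e0; have e2 : 0 < e / 2 by lra.
have [N HN] := cu _ e2; exists N => m n hm hn.
have := rnorm_distD ip_inner (u m) x (u n); have := HN m hm; have := HN n hn.
rewrite (rnorm_distC ip_inner x); lra.
Qed.

Lemma convDZ u v w x y (a : R[i]) :
  conv u x -> conv v y -> (forall n, w n = u n + a *: v n) -> conv w (x + a *: y).
Proof.
move=> cu cv hw e e0.
set K := cmod a + 1.
have K0 : 0 < K by rewrite /K; have := cmod_ge0 a; lra.
have e2 : 0 < e / 2 by lra.
have eK : 0 < e / (2 * K) by rewrite divr_gt0 // mulr_gt0.
have [N1 H1] := cu _ e2; have [N2 H2] := cv _ eK.
exists (maxn N1 N2) => n hn.
have h1 := H1 n (leq_trans (leq_maxl _ _) hn).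
have h2 := H2 n (leq_trans (leq_maxr _ _) hn).
have -> : w n - (x + a *: y) = (u n - x) + a *: (v n - y).
  by rewrite hw scalerBr opprD addrACA.
apply: le_lt_trans (rnormD ip_inner _ _) _; rewrite (rnormZ ip_inner).
have q : cmod a * rnorm (v n - y) <= K * rnorm (v n - y).
  by rewrite ler_wpM2r ?rnorm_ge0 // /K; lra.
have q2 : K * rnorm (v n - y) < K * (e / (2 * K)) by rewrite ltr_pM2l.
have q3 : K * (e / (2 * K)) = e / 2 by field; rewrite /K; have := cmod_ge0 a; lra.
lra.
Qed.

Lemma conv_rnorm_le u x y (B : R) n0 : conv u x ->
  (forall m, (n0 <= m)%N -> rnorm (u m - y) <= B) -> rnorm (x - y) <= B.
Proof.
move=> cu hB; apply/ler_addgt0Pr => e e0.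
have [N HN] := cu e e0.
have h1 := HN (maxn N n0) (leq_maxl _ _).
have h2 := hB (maxn N n0) (leq_maxr _ _).
have h3 := rnorm_distD ip_inner x (u (maxn N n0)) y.
rewrite rnorm_distC // in h1; lra.
Qed.

Lemma dense_orthogonal_eq0 (D : V -> Prop) d : dense ip D ->
  (forall p, D p -> ip p d = 0) -> d = 0.
Proof.
move=> /denseP hD hd; apply: (rnorm_eq0 ip_inner).
apply/eqP; rewrite eq_le rnorm_ge0 // andbT leNgt; apply/negP => hn.
have [p [Dp Hp]] := hD d _ hn.
have e : ip d d = ip (d - p) d by rewrite ipBl // (hd p Dp) subr0.
have := cauchy_schwarz ip_inner (d - p) d.
rewrite -e cmod_ipxx // -(rnorm_sqr ip_inner) expr2 => h.
have : rnorm (d - p) * rnorm d < rnorm d * rnorm d by rewrite ltr_pM2r.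
by rewrite ltNge h.
Qed.

(* Passing to the limit in [(w, x_n) = (a, y_n)]. *)
Lemma adjoint_closed (A : oprel V V) : closed_op ip ip (adjoint ip ip A).
Proof.
move=> u v x y huv /convergesP cu /convergesP cv a w Aaw.
apply/eqP; rewrite -subr_eq0; apply/eqP; apply: cmod_small_eq0 => e e0.
set K := rnorm w + rnorm a + 1.
have K0 : 0 < K by rewrite /K; have := rnorm_ge0 ip w; have := rnorm_ge0 ip a; lra.
have e1 : 0 < e / (2 * K) by rewrite divr_gt0 // mulr_gt0.
have [N1 H1] := cu _ e1; have [N2 H2] := cv _ e1.
set n := maxn N1 N2.
have h1 := H1 n (leq_maxl _ _); have h2 := H2 n (leq_maxr _ _).
have -> : ip w x - ip a y = ip w (x - u n) - ip a (y - v n).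
  by rewrite !ipBr // (huv n a w Aaw); ring.
apply: le_lt_trans (cmodD _ _) _; rewrite cmodN.
have c1 := cauchy_schwarz ip_inner w (x - u n).
have c2 := cauchy_schwarz ip_inner a (y - v n).
rewrite rnorm_distC // in h1; rewrite rnorm_distC // in h2.
have hw := rnorm_ge0 ip w; have ha := rnorm_ge0 ip a.
have q1 : rnorm w * rnorm (x - u n) < K * (e / (2 * K)).
  apply: le_lt_trans (_ : K * rnorm (x - u n) < _).
    by rewrite ler_wpM2r ?rnorm_ge0 // /K; lra.
  by rewrite ltr_pM2l.
have q2 : rnorm a * rnorm (y - v n) <= K * (e / (2 * K)).
  apply: le_trans (_ : K * rnorm (y - v n) <= _).
    by rewrite ler_wpM2r ?rnorm_ge0 // /K; lra.
  by rewrite ler_wpM2l ?(ltW K0) // ltW.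
have q3 : K * (e / (2 * K)) = e / 2 by field; rewrite /K; lra.
lra.
Qed.

End Convergence.

Section NatInverse.
Variable R : realType.

Lemma invSn_gt0 (i : nat) : 0 < (i.+1%:R : R)^-1.
Proof. by rewrite invr_gt0 ltr0Sn. Qed.

Lemma ler_invSn (i N : nat) : (N <= i)%N -> (i.+1%:R : R)^-1 <= (N.+1%:R)^-1.
Proof. by move=> h; rewrite lef_pV2 ?posrE ?ltr0Sn // ler_nat ltnS. Qed.

Lemma exists_invSn_lt (e : R) : 0 < e -> exists N : nat, (N.+1%:R : R)^-1 < e.
Proof.
move=> e0; exists (Num.Def.archi_bound e^-1).
have e1 : 0 <= e^-1 by rewrite invr_ge0 ltW.
have h := archi_boundP e1.
rewrite -[e in _ < e](invrK e) ltf_pV2 ?posrE ?invr_gt0 ?ltr0Sn //.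
by apply: lt_trans h _; rewrite ltr_nat.
Qed.

End NatInverse.

Section NearestPoint.
Variable R : realType.
Variable V : lmodType R[i].
Variable ip : V -> V -> R[i].
Hypothesis ip_inner : is_inner_product ip.
Implicit Types (u p x y : V) (M : V -> Prop).
Local Notation sqnorm := (sqnorm ip).
Local Notation rnorm := (rnorm ip).
Local Notation conv := (conv ip).
Local Notation cauchy := (cauchy ip).

Lemma minimizing_sequence_cauchy M u (d : R) (v : nat -> V) :
  (forall x y, M x -> M y -> M (2^-1 *: (x + y))) ->
  (forall m, M m -> d <= sqnorm (u - m)) ->
  (forall n, M (v n)) -> (forall n, sqnorm (u - v n) < d + (n.+1%:R)^-1) ->
  cauchy v.
Proof.
move=> Mmid Mlow Mv vd.
have mid i j : sqnorm (v j - v i) <= 2 * (i.+1%:R)^-1 + 2 * (j.+1%:R)^-1.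
  have hw := Mlow _ (Mmid _ _ (Mv i) (Mv j)).
  have e1 : (u - v i) + (u - v j) = 2%:R *: (u - 2^-1 *: (v i + v j)).
    rewrite scalerBr scalerA mulfV ?pnatr_eq0 // scale1r scaler_nat mulr2n.
    by rewrite opprD addrACA.
  have e2 : (u - v i) - (u - v j) = v j - v i.
    by rewrite opprB addrC addrA subrK.
  have := parallelogram ip_inner (u - v i) (u - v j); rewrite e1 e2 sqnormZ //.
  rewrite cmod_nat expr2.
  have := vd i; have := vd j; move: hw.
  set ti := (i.+1%:R : R)^-1; set tj := (j.+1%:R : R)^-1; lra.
move=> e e0.
have [N HN] := exists_invSn_lt (divr_gt0 (exprn_gt0 2 e0) (ltr0Sn R 3)).
exists N => i j hi hj.
have := mid j i; have := ler_invSn R hi; have := ler_invSn R hj.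
rewrite -(rnorm_sqr ip_inner) => h1 h2 h3.
set ti := (i.+1%:R : R)^-1 in h1 h2 h3; set tj := (j.+1%:R : R)^-1 in h1 h2 h3.
set tN := (N.+1%:R : R)^-1 in h1 h2 HN.
have h4 : rnorm (v i - v j) ^+ 2 < e ^+ 2 by lra.
by have := rnorm_ge0 ip (v i - v j); nra.
Qed.

Lemma sqnorm_limit_le u p (v : nat -> V) (d : R) : 0 <= d -> conv v p ->
  (forall n, sqnorm (u - v n) < d + (n.+1%:R)^-1) -> sqnorm (u - p) <= d.
Proof.
move=> d0 cp vd; apply/ler_addgt0Pr => e e0.
set K := 2 * d + 5.
have K0 : 0 < K by rewrite /K; lra.
have e2 : 0 < e / 2 by lra.
have [N1 HN1] := exists_invSn_lt e2.
have [N2 HN2] := cp _ (divr_gt0 e0 (mulr_gt0 (ltr0Sn R 1) K0)).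
have [N3 HN3] := cp _ ltr01.
set n := maxn N1 (maxn N2 N3).
have hb1 := HN2 n (leq_trans (leq_maxl N2 N3) (leq_maxr _ _)).
have hb2 := HN3 n (leq_trans (leq_maxr N2 N3) (leq_maxr _ _)).
have ht := ler_invSn R (leq_maxl N1 (maxn N2 N3)); rewrite -/n in ht.
have ht1 : (n.+1%:R : R)^-1 <= 1 by rewrite invf_le1 ?ler1n ?ltr0Sn.
have hA := vd n; rewrite -(rnorm_sqr ip_inner) in hA.
have tri := rnorm_distD ip_inner u (v n) p.
set A := rnorm (u - v n) in hA tri; set b := rnorm (v n - p) in hb1 hb2 tri.
set t := (n.+1%:R : R)^-1 in hA ht ht1.
have A0 : 0 <= A := rnorm_ge0 ip _.
have b0 : 0 <= b := rnorm_ge0 ip _.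
have up0 := rnorm_ge0 ip (u - p).
have s1 : A <= d + 2 by nra.
have s2 : rnorm (u - p) ^+ 2 <= (A + b) ^+ 2 by nra.
have s3 : b * K < e / 2.
  have : b * (2 * K) < e by rewrite -ltr_pdivlMr // mulr_gt0.
  lra.
have s4 : b * A <= b * (d + 2) by rewrite ler_wpM2l.
have s5 : b * b <= b by nra.
have ex : (A + b) ^+ 2 = A ^+ 2 + 2 * (b * A) + b * b by ring.
have s6 : b * K = 2 * (b * d) + 5 * b by rewrite /K; ring.
set a3 := (N1.+1%:R : R)^-1 in HN1 ht.
rewrite -(rnorm_sqr ip_inner); lra.
Qed.

Lemma nearest_point_orthogonal M u p :
  (forall a x y, M x -> M y -> M (a *: x + y)) -> M p ->
  (forall m, M m -> sqnorm (u - p) <= sqnorm (u - m)) ->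
  forall m, M m -> ip (u - p) m = 0.
Proof.
move=> Mlin Mp pmin m Mm; have [//|ne0] := eqVneq (ip (u - p) m) 0.
have m0 : m != 0 by apply: contra_neq ne0 => ->; rewrite ip0r.
set t := ip (u - p) m / ip m m.
have := pmin _ (Mlin t _ _ Mm Mp).
have -> : u - (t *: m + p) = (u - p) - t *: m by rewrite opprD addrCA addrC.
rewrite sqnorm_sub_proj // => hle.
have c0 : 0 < cmod (ip (u - p) m).
  by rewrite lt0r cmod_ge0 andbT; apply: contra ne0 => /eqP /cmod_eq0 ->.
have : 0 < cmod (ip (u - p) m) ^+ 2 / sqnorm m.
  by rewrite divr_gt0 ?exprn_gt0 ?sqnorm_gt0.
by move=> pos; exfalso; lra.
Qed.

End NearestPoint.

Lemma ler_natS_exp3 (R : realType) (N : nat) : (N.+1%:R : R) <= 3 ^+ N.+1.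
Proof.
elim: N => [|N IH]; first by rewrite expr1 ler_nat.
rewrite exprS -natr1.
have : 1 <= (3 : R) ^+ N.+1 by rewrite exprn_ege1 // ler1n.
lra.
Qed.

Definition third_pow (R : realType) (n : nat) : R := 3^-1 ^+ n.+1.

Lemma third_pow_gt0 (R : realType) n : 0 < third_pow R n.
Proof. by rewrite /third_pow exprn_gt0 // invr_gt0. Qed.

Lemma third_powS (R : realType) n : third_pow R n = 3 * third_pow R n.+1.
Proof.
by rewrite /third_pow [X in _ = _ * X]exprS mulrA divff ?mul1r // pnatr_eq0.
Qed.

Section CompleteSpace.
Variable R : realType.
Variable V : lmodType R[i].
Variable ip : V -> V -> R[i].
Hypothesis ip_inner : is_inner_product ip.
Hypothesis ip_complete : forall u, cauchy_seq ip u -> exists x, converges ip u x.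
Implicit Types (u p x y : V) (M : V -> Prop).
Local Notation sqnorm := (sqnorm ip).
Local Notation rnorm := (rnorm ip).
Local Notation conv := (conv ip).
Local Notation cauchy := (cauchy ip).

Lemma cauchy_conv (u : nat -> V) : cauchy u -> exists x, conv u x.
Proof.
move=> /(cauchy_seqP ip_inner) /ip_complete [x /(convergesP ip_inner) h].
by exists x.
Qed.

Lemma exists_nearest_point M u m0 : M m0 ->
  (forall x y, M x -> M y -> M (2^-1 *: (x + y))) ->
  (forall v x, (forall n, M (v n)) -> conv v x -> M x) ->
  exists2 p, M p & forall m, M m -> sqnorm (u - p) <= sqnorm (u - m).
Proof.
move=> Mm0 Mmid Mcl.
pose E : set R := fun r => exists m, M m /\ r = sqnorm (u - m).
have Ene : (E !=set0)%classic by exists (sqnorm (u - m0)), m0.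
have Elb : has_lbound E by exists 0 => r [m [_ ->]]; exact: sqnorm_ge0.
have d0 : 0 <= inf E by apply: lb_le_inf Ene _ => r [m [_ ->]]; exact: sqnorm_ge0.
have Mlow m : M m -> inf E <= sqnorm (u - m) by move=> Mm; apply: (ge_inf Elb); exists m.
have near n : exists m, M m /\ sqnorm (u - m) < inf E + (n.+1%:R)^-1.
  have [r [m [Mm ->]] hr] := inf_adherent (invSn_gt0 R n) (conj Ene Elb).
  by exists m.
pose v n := sval (cid (near n)).
have [Mv vlow] : (forall n, M (v n)) /\ forall n, sqnorm (u - v n) < inf E + (n.+1%:R)^-1.
  by split=> n; case: (svalP (cid (near n))).
have [p cp] := cauchy_conv (minimizing_sequence_cauchy ip_inner Mmid Mlow Mv vlow).
exists p; first exact: Mcl cp.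
by move=> m Mm; apply: le_trans (sqnorm_limit_le ip_inner d0 cp vlow) (Mlow m Mm).
Qed.

Lemma closed_subspace_full M :
  M 0 -> (forall a x y, M x -> M y -> M (a *: x + y)) ->
  (forall v x, (forall n, M (v n)) -> conv v x -> M x) ->
  (forall d, (forall m, M m -> ip m d = 0) -> d = 0) -> forall u, M u.
Proof.
move=> M0 Mlin Mcl Mperp u.
have Mmid x y : M x -> M y -> M (2^-1 *: (x + y)).
  move=> Mx My; rewrite scalerDr; apply: (Mlin) => //.
  by rewrite -[_ *: y]addr0; apply: Mlin.
have [p Mp pmin] := exists_nearest_point u M0 Mmid Mcl.
have orth := nearest_point_orthogonal ip_inner Mlin Mp pmin.
have /eqP : u - p = 0.
  by apply: Mperp => m Mm; rewrite ipC // orth // conjC0.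
by rewrite subr_eq0 => /eqP ->.
Qed.

Local Notation r := (@third_pow R).

Lemma exists_far_point a y (s : R) : 0 < s -> a != 0 ->
  exists z, rnorm (z - y) = s /\ s * rnorm a <= cmod (ip a z).
Proof.
move=> s0 a0; have na0 := rnorm_gt0 ip_inner a0.
pose k := ((s / rnorm a)%:C) *: a.
have ipk : cmod (ip a k) = s * rnorm a.
  rewrite ipZr // cmodM cmodJ cmod_real ?divr_ge0 ?ltW // cmod_ipxx //.
  by rewrite -(rnorm_sqr ip_inner) expr2; field; apply/lt0r_neq0.
have nk : rnorm k = s.
  by rewrite rnormZ // cmod_real ?divr_ge0 ?ltW //; field; apply/lt0r_neq0.
have diff : ip a (y + k) - ip a (y - k) = 2 * ip a k by rewrite ipDr // ipBr //; ring.
have := cmodD (ip a (y + k)) (- ip a (y - k)).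
rewrite diff cmodN cmodM cmod_nat ipk => hsum.
have [hle|hlt] := lerP (cmod (ip a (y - k))) (cmod (ip a (y + k))).
- by exists (y + k); rewrite addrC addKr nk; split=> //; lra.
- by exists (y - k); rewrite addrC addKr rnormN // nk; split=> //; lra.
Qed.

(* Step [n] moves by [r n] in the direction that makes [|(a n, _)|] large; all
   later steps together move by at most [r n / 2], so the gain survives. *)
Lemma gliding_hump (a : nat -> V) : (forall n, a n != 0) ->
  exists xs : nat -> V,
    (forall n, r n * rnorm (a n) <= cmod (ip (a n) (xs n))) /\
    (forall n m, (n <= m)%N -> rnorm (xs m - xs n) <= r n / 2).
Proof.
move=> a0; have far_ex n y := exists_far_point y (third_pow_gt0 R n) (a0 n).
pose far n y := sval (cid (far_ex n y)).
have [far_dist far_big] : (forall n y, rnorm (far n y - y) = r n) /\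
    (forall n y, r n * rnorm (a n) <= cmod (ip (a n) (far n y))).
  by split=> n y; case: (svalP (cid (far_ex n y))).
pose fix xs n := if n is m.+1 then far n (xs m) else far 0%N 0.
exists xs; split; first by case=> [|n]; apply: far_big.
have tail n k : rnorm (xs (n + k)%N - xs n) <= r n / 2 - r (n + k)%N / 2.
  elim: k => [|k IH]; first by rewrite addn0 subrr rnorm0 // subrr.
  have := rnorm_distD ip_inner (xs (n + k.+1)%N) (xs (n + k)%N) (xs n).
  by rewrite addnS far_dist; have := third_powS R (n + k)%N; lra.
move=> n m /subnKC <-; have := tail n (m - n)%N.
by have := third_pow_gt0 R (n + (m - n))%N; lra.
Qed.

Lemma weakly_bounded_bounded (P : V -> Prop) :
  (forall k, exists M : R, forall a, P a -> cmod (ip a k) <= M) ->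
  exists c : R, forall a, P a -> rnorm a <= c.
Proof.
move=> Pbd; apply: NNPP => unbd.
have big c : exists a, P a /\ c < rnorm a.
  apply: NNPP => h; apply: unbd; exists c => a Pa.
  by rewrite leNgt; apply/negP => hc; apply: h; exists a.
pose K n : R := 2 * n.+1%:R / r n.
pose a n := sval (cid (big (K n))).
have [Pa Ka] : (forall n, P (a n)) /\ forall n, K n < rnorm (a n).
  by split=> n; case: (svalP (cid (big (K n)))).
have a0 n : a n != 0.
  apply: contraTneq (Ka n) => ->; rewrite rnorm0 // -leNgt.
  by rewrite ltW // divr_gt0 ?third_pow_gt0 // mulr_gt0 ?ltr0Sn.
have [xs [hump tail]] := gliding_hump a0.
have [x cx] : exists x, conv xs x.
  apply: cauchy_conv => e e0; have [N HN] := exists_invSn_lt e0.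
  exists N => m n hm hn; have := rnorm_distD ip_inner (xs m) (xs N) (xs n).
  have := tail _ _ hm; have := tail _ _ hn; rewrite (rnorm_distC ip_inner (xs N)).
  have : r N <= (N.+1%:R)^-1.
    by rewrite /third_pow exprVn lef_pV2 ?posrE ?ltr0Sn ?exprn_gt0 ?ler_natS_exp3.
  by move: HN; set tN := (N.+1%:R : R)^-1; lra.
have xnear n : rnorm (x - xs n) <= r n / 2 by apply: conv_rnorm_le cx (tail n).
have [Mx HMx] := Pbd x.
have Mx0 : 0 <= Mx := le_trans (cmod_ge0 _) (HMx _ (Pa 0%N)).
set n := Num.Def.archi_bound Mx; have hn := archi_boundP Mx0; rewrite -/n in hn.
have : n.+1%:R < cmod (ip (a n) x).
  have := cmodD (ip (a n) x) (- ip (a n) (x - xs n)).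
  have -> : ip (a n) x + - ip (a n) (x - xs n) = ip (a n) (xs n).
    by rewrite ipBr //; ring.
  rewrite cmodN.
  have := cauchy_schwarz ip_inner (a n) (x - xs n).
  have : rnorm (a n) * rnorm (x - xs n) <= rnorm (a n) * (r n / 2).
    by rewrite ler_wpM2l ?rnorm_ge0.
  have : r n * K n < r n * rnorm (a n) by rewrite ltr_pM2l ?third_pow_gt0.
  have -> : r n * K n = 2 * n.+1%:R by rewrite /K; field; apply/lt0r_neq0/third_pow_gt0.
  by have := hump n; lra.
have := HMx _ (Pa n); have : n%:R < (n.+1%:R : R) by rewrite ltr_nat.
lra.
Qed.

End CompleteSpace.

Section LinearMaps.
Variable R : realType.
Variables X Y : lmodType R[i].
Implicit Types (D : X -> Prop) (F : X -> Y) (A : oprel X Y).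

Lemma linear_onD D F x y : linear_on D F -> D x -> D y -> F (x + y) = F x + F y.
Proof. by move=> h Dx Dy; have := h 1 x y Dx Dy; rewrite !scale1r. Qed.

Lemma linear_onB D F x y : linear_on D F -> D x -> D y -> F (x - y) = F x - F y.
Proof.
move=> h Dx Dy; have := h (-1) y x Dy Dx.
by rewrite !scaleN1r addrC [- F y + _]addrC.
Qed.

Lemma linear_opD A x1 y1 x2 y2 :
  linear_op A -> A x1 y1 -> A x2 y2 -> A (x1 + x2) (y1 + y2).
Proof. by case=> _ _ h h1 h2; have := h 1 _ _ _ _ h1 h2; rewrite !scale1r. Qed.

Lemma linear_opB A x1 y1 x2 y2 :
  linear_op A -> A x1 y1 -> A x2 y2 -> A (x1 - x2) (y1 - y2).
Proof.
case=> _ _ h h1 h2; have := h (-1) _ _ _ _ h2 h1.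
by rewrite !scaleN1r addrC [- y2 + _]addrC.
Qed.

End LinearMaps.

Section Adjoint.
Variable R : realType.
Variable V : lmodType R[i].
Variable ip : V -> V -> R[i].
Hypothesis ip_inner : is_inner_product ip.
Implicit Types (A B : oprel V V) (l : R[i]).
Local Notation adjoint := (adjoint ip ip).
Local Notation rnorm := (rnorm ip).

Lemma adjoint_releq A B : releq A B -> releq (adjoint A) (adjoint B).
Proof. by move=> AB y z; split=> h x w /AB; apply: h. Qed.

Lemma adjointDZ A a d1 e1 d2 e2 : adjoint A d1 e1 -> adjoint A d2 e2 ->
  adjoint A (a *: d1 + d2) (a *: e1 + e2).
Proof.
move=> h1 h2 x w Axw.
by rewrite !ipDr // !ipZr // (h1 _ _ Axw) (h2 _ _ Axw).
Qed.

Lemma adjointB A d1 e1 d2 e2 : adjoint A d1 e1 -> adjoint A d2 e2 ->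
  adjoint A (d1 - d2) (e1 - e2).
Proof. by move=> h1 h2 x w Axw; rewrite !ipBr // (h1 _ _ Axw) (h2 _ _ Axw). Qed.

Lemma adjoint00 A : adjoint A 0 0.
Proof. by move=> x w _; rewrite !ip0r. Qed.

Lemma in_resolvent_bound A l : in_resolvent ip A l ->
  exists2 K : R, 0 <= K & forall x y, A x y -> rnorm x <= K * rnorm (y - l *: x).
Proof.
case=> _ _ _ [c bnd]; exists `|complex.Re c|; first exact: normr_ge0.
move=> x y /bnd; rewrite !hnormE // lecE => /andP[_].
have -> : forall (z : R[i]) (b : R), complex.Re (z * b%:C) = complex.Re z * b.
  by case=> ? ? b /=; rewrite mulr0 subr0.
move=> /= h; apply: le_trans h _.
by rewrite ler_wpM2r ?rnorm_ge0 ?ler_norm.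
Qed.

(* [(d, d) = (x, e - l^* d)] for a preimage [x] of [d] under [A - l]. *)
Lemma adjoint_bounded_below A l (K : R) : 0 <= K ->
  (forall h, exists x y, A x y /\ y - l *: x = h) ->
  (forall x y, A x y -> rnorm x <= K * rnorm (y - l *: x)) ->
  forall d e, adjoint A d e -> rnorm d <= K * rnorm (e - l^* *: d).
Proof.
move=> K0 surj bnd d e ade; have [x [y [Axy xd]]] := surj d.
have E : ip d d = ip x (e - l^* *: d).
  rewrite ipBr // ipZr // conjCK -(ade _ _ Axy) -{1}xd.
  by rewrite ipBl // ipZl.
have h1 := cauchy_schwarz ip_inner x (e - l^* *: d).
rewrite -E cmod_ipxx // -(rnorm_sqr ip_inner) expr2 in h1.
have h2 := bnd _ _ Axy; rewrite xd in h2.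
have [->|d0] := eqVneq d 0; first by rewrite rnorm0 // mulr_ge0 ?rnorm_ge0.
rewrite -(ler_pM2r (rnorm_gt0 ip_inner d0)); apply: le_trans h1 _.
by rewrite mulrAC ler_wpM2r ?rnorm_ge0.
Qed.

End Adjoint.

Section ClosedRange.
Variable R : realType.
Variable V : lmodType R[i].
Variable ip : V -> V -> R[i].
Hypothesis ip_inner : is_inner_product ip.
Hypothesis ip_complete : forall u, cauchy_seq ip u -> exists x, converges ip u x.
Implicit Types (A B : oprel V V) (l m : R[i]).
Local Notation adjoint := (adjoint ip ip).
Local Notation rnorm := (rnorm ip).
Local Notation conv := (conv ip).

Lemma bounded_below_range_closed B m (K : R) : 0 <= K -> closed_op ip ip B ->
  (forall d1 e1 d2 e2, B d1 e1 -> B d2 e2 -> B (d1 - d2) (e1 - e2)) ->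
  (forall d e, B d e -> rnorm d <= K * rnorm (e - m *: d)) ->
  forall u x, (forall n, exists g k, B g k /\ k - m *: g = u n) -> conv u x ->
  exists g k, B g k /\ k - m *: g = x.
Proof.
move=> K0 Bcl BB Bbd u x Bu ux.
have pick n : exists gk : V * V, B gk.1 gk.2 /\ gk.2 - m *: gk.1 = u n.
  by have [g [k hk]] := Bu n; exists (g, k).
pose gs n := (sval (cid (pick n))).1; pose ks n := (sval (cid (pick n))).2.
have [Bgk gku] : (forall n, B (gs n) (ks n)) /\ forall n, ks n - m *: gs n = u n.
  by split=> n; case: (svalP (cid (pick n))).
have ksE n : ks n = u n + m *: gs n by rewrite -(gku n) subrK.
have gs_cauchy : cauchy ip gs.
  move=> e e0; have eK : 0 < e / (K + 1) by rewrite divr_gt0 //; lra.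
  have [N HN] := conv_cauchy ip_inner ux eK; exists N => p q hp hq.
  have := Bbd _ _ (BB _ _ _ _ (Bgk p) (Bgk q)).
  have -> : ks p - ks q - m *: (gs p - gs q) = u p - u q.
    by rewrite !ksE scalerBr (opprD (u q)) (addrACA (u p)) addrK.
  have := HN p q hp hq; have := rnorm_ge0 ip (u p - u q).
  have : (K + 1) * (e / (K + 1)) = e by field; lra.
  nra.
have [g cg] := cauchy_conv ip_inner ip_complete gs_cauchy.
exists g, (x + m *: g); split; last by rewrite addrK.
apply: Bcl Bgk _ _; apply/(convergesP ip_inner) => //.
exact: convDZ ux cg ksE.
Qed.

Lemma adjoint_resolvent_surj A l : in_resolvent ip A l ->
  op_sub (adjoint (adjoint A)) A ->
  forall h, exists g k, adjoint A g k /\ k - l^* *: g = h.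
Proof.
move=> Al AA; have [K K0 bnd] := in_resolvent_bound ip_inner Al.
case: Al => _ surj inj _.
pose M h := exists g k, adjoint A g k /\ k - l^* *: g = h.
apply: (closed_subspace_full ip_inner ip_complete (M := M)).
- by exists 0, 0; split; [exact: adjoint00 | rewrite scaler0 subr0].
- move=> a _ _ [g1 [k1 [A1 <-]]] [g2 [k2 [A2 <-]]].
  exists (a *: g1 + g2), (a *: k1 + k2); split; first exact: adjointDZ.
  by rewrite scalerDr !scalerA scalerBr scalerA [l^* * a]mulrC opprD addrACA.
- move=> u x Mu ux.
  apply: (bounded_below_range_closed K0 (adjoint_closed ip_inner (A := A)) _
    (adjoint_bounded_below ip_inner K0 surj bnd) Mu ux).
  exact: adjointB.
- move=> d dperp.
  have Ad : A d (l *: d).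
    apply: AA => g k Agk; rewrite ipZr //.
    have := dperp _ (ex_intro _ g (ex_intro _ k (conj Agk erefl))).
    by rewrite ipBl // ipZl // => /eqP; rewrite subr_eq0 => /eqP.
  have A00 : A 0 0 by apply: AA; exact: adjoint00.
  by apply: (inj _ _ _ _ Ad A00); rewrite subrr scaler0 subr0.
Qed.

End ClosedRange.

Section AdjointPair.
Variable R : realType.
Variable V : lmodType R[i].
Variable ip : V -> V -> R[i].
Hypothesis ip_inner : is_inner_product ip.
Variables (A At : oprel V V) (l : R[i]).
Hypothesis pair_symm : forall x y g k, A x y -> At g k -> ip y g = ip x k.
Hypothesis A_surj : forall h, exists x y, A x y /\ y - l *: x = h.
Hypothesis At_surj : forall h, exists g k, At g k /\ k - l^* *: g = h.
Local Notation adjoint := (adjoint ip ip).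
Local Notation rnorm := (rnorm ip).

Lemma adjoint_pair_sub : op_sub A (adjoint At).
Proof.
move=> x y Axy g k Agk.
by rewrite (ipC ip_inner k x) (ipC ip_inner g y) (pair_symm Axy Agk).
Qed.

Lemma adjoint_pair_eq0 d : (forall g k, At g k -> ip k d = ip g (l *: d)) -> d = 0.
Proof.
move=> dperp; apply: (ipxx_eq0 ip_inner); have [g [k [Agk e]]] := At_surj d.
by rewrite -{1}e ipBl // ipZl // (dperp _ _ Agk) ipZr // subrr.
Qed.

Lemma adjoint_pair_inj x1 y1 x2 y2 : A x1 y1 -> A x2 y2 ->
  y1 - l *: x1 = y2 - l *: x2 -> x1 = x2.
Proof.
move=> A1 A2 e; apply/eqP; rewrite -subr_eq0; apply/eqP.
apply: adjoint_pair_eq0 => g k Agk.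
rewrite ipBr // (adjoint_pair_sub A1 Agk) (adjoint_pair_sub A2 Agk) -ipBr //.
congr (ip g); apply/eqP.
by rewrite -subr_eq0 scalerBr opprD addrACA -opprD e subrr.
Qed.

Lemma adjoint_pair_eq : releq A (adjoint At).
Proof.
move=> f k; split; first exact: adjoint_pair_sub.
move=> adjfk; have [x [y [Axy e]]] := A_surj (k - l *: f).
suff fx : f = x.
  move: e; rewrite -fx => /(congr1 (fun z => z + l *: f)); rewrite !subrK => yk.
  by rewrite -yk fx.
apply/eqP; rewrite -subr_eq0; apply/eqP; apply: adjoint_pair_eq0 => g k' Agk'.
rewrite ipBr // (adjfk _ _ Agk') (adjoint_pair_sub Axy Agk') -ipBr //.
congr (ip g); apply/eqP.
by rewrite -subr_eq0 scalerBr opprD addrACA -opprD e subrr.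
Qed.

Lemma adjoint_pair_closed : closed_op ip ip A.
Proof.
move=> u v x y Auv ux vy; apply/adjoint_pair_eq.
exact: (adjoint_closed ip_inner (A := At) (fun n => adjoint_pair_sub (Auv n)) ux vy).
Qed.

Hypothesis ip_complete : forall u, cauchy_seq ip u -> exists x, converges ip u x.

(* Uniform boundedness applied to the unit vectors [(A - l) x = y - l x]: their
   preimages [x] are weakly bounded because [(x, k - l^* g) = (y - l x, g)]. *)
Lemma adjoint_pair_bound :
  exists c : R, forall x y, A x y -> rnorm x <= c * rnorm (y - l *: x).
Proof.
pose P a := exists x y, A x y /\ y - l *: x != 0 /\
  a = ((rnorm (y - l *: x))^-1)%:C *: x.
have [c Pc] : exists c : R, forall a, P a -> rnorm a <= c.
  apply: (weakly_bounded_bounded ip_inner ip_complete (P := P)) => k.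
  have [g [k' [Agk <-]]] := At_surj k; exists (rnorm g).
  move=> _ [x [y [Axy [ne0 ->]]]].
  have n0 := rnorm_gt0 ip_inner ne0.
  have n0' : 0 <= (rnorm (y - l *: x))^-1 by rewrite invr_ge0 ltW.
  rewrite ipZl // cmodM cmod_real //.
  have -> : ip x (k' - l^* *: g) = ip (y - l *: x) g.
    by rewrite ipBr // ipZr // conjCK ipBl // ipZl // -(pair_symm Axy Agk).
  by rewrite [_^-1 * _]mulrC ler_pdivrMr // mulrC cauchy_schwarz.
exists c => x y Axy.
have [e0|ne0] := eqVneq (y - l *: x) 0.
  rewrite e0; suff -> : x = 0 by rewrite !rnorm0 // mulr0.
  apply: adjoint_pair_eq0 => g k Agk.
  by move/eqP: e0; rewrite subr_eq0 => /eqP <-; apply: adjoint_pair_sub.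
have n0 := rnorm_gt0 ip_inner ne0.
have n0' : 0 <= (rnorm (y - l *: x))^-1 by rewrite invr_ge0 ltW.
have := Pc _ (ex_intro _ x (ex_intro _ y (conj Axy (conj ne0 erefl)))).
by rewrite rnormZ // cmod_real // [_^-1 * _]mulrC ler_pdivrMr.
Qed.

Lemma adjoint_pair_resolvent : single_valued A -> in_resolvent ip A l.
Proof.
move=> Asv; split=> //; first exact: adjoint_pair_inj.
have [c Hc] := adjoint_pair_bound; exists c%:C => x y Axy.
by rewrite !hnormE // -real_complexM lecR; apply: Hc.
Qed.

End AdjointPair.

Section BoundaryTriple.
Variable R : realType.
Variables H G : lmodType R[i].
Variables (ipH : H -> H -> R[i]) (ipG : G -> G -> R[i]).
Hypotheses (ipH_inner : is_inner_product ipH) (ipG_inner : is_inner_product ipG).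

Definition green_identity (T Tt : oprel H H) (Gam0 Gam1 Gamt0 Gamt1 : H -> G) :=
  forall f g Tf Ttg, T f Tf -> Tt g Ttg ->
    ipH Tf g - ipH f Ttg = ipG (Gam1 f) (Gamt0 g) - ipG (Gam0 f) (Gamt1 g).

Lemma green_identity_sym (T Tt : oprel H H) (Gam0 Gam1 Gamt0 Gamt1 : H -> G) :
  green_identity T Tt Gam0 Gam1 Gamt0 Gamt1 -> green_identity Tt T Gamt0 Gamt1 Gam0 Gam1.
Proof.
move=> green f g Ttf Tg hf hg; have := congr1 (fun z => - z^*) (green _ _ _ _ hg hf).
have conjB (a b : R[i]) : (a - b)^* = a^* - b^* by exact: rmorphB.
by rewrite /= !conjB -!(ipC ipH_inner) -!(ipC ipG_inner) !opprB.
Qed.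

Lemma gamma_field_total (Tt : oprel H H) (Gamt0 : H -> G) nu :
  linear_op Tt -> linear_on (dom Tt) Gamt0 ->
  (forall h, exists g k, restr_ker Tt Gamt0 g k /\ k - nu *: g = h) ->
  dense ipG (fun phi => exists g, dom Tt g /\ Gamt0 g = phi) ->
  forall z, (forall phi f, gamma_field Tt Gamt0 nu phi f -> ipG phi z = 0) -> z = 0.
Proof.
move=> linTt linGt0 surj dens z zperp.
apply: (dense_orthogonal_eq0 ipG_inner dens) => _ [g [[k Tgk] <-]].
have [g0 [k0 [[Tg0 Gg0] e]]] := surj (k - nu *: g).
apply: (zperp _ (g - g0)); split.
- have -> : nu *: (g - g0) = k - k0.
  by apply/eqP; rewrite eq_sym -subr_eq0 scalerBr opprD addrACA -opprD -e subrr.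
  exact: linear_opB linTt Tgk Tg0.
- by rewrite (linear_onB linGt0) ?Gg0 ?subr0 //; [exists k | exists k0].
Qed.

(* In the paper's notation: [gamma~(nu)^* = Gamma_1 (A_0 - mu)^-1]. *)
Lemma gamma_field_adjoint (T Tt : oprel H H) (Gam0 Gam1 Gamt0 Gamt1 : H -> G)
    mu nu x y z :
  green_identity T Tt Gam0 Gam1 Gamt0 Gamt1 -> nu^* = mu ->
  (forall z, (forall phi f, gamma_field Tt Gamt0 nu phi f -> ipG phi z = 0) -> z = 0) ->
  restr_ker T Gam0 x y ->
  adjoint ipG ipH (gamma_field Tt Gamt0 nu) (y - mu *: x) z -> z = Gam1 x.
Proof.
move=> green nuJ tot [Txy G0x] adjz.
apply/eqP; rewrite -subr_eq0; apply/eqP; apply: tot => phi f [Tf Gf].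
have := green _ _ _ _ Txy Tf.
rewrite G0x Gf ip0l // subr0 ipZr // nuJ -ipZl // -ipBl // => E.
by rewrite ipBr // -(adjz _ _ (conj Tf Gf)) (ipC ipG_inner) -E -(ipC ipH_inner) subrr.
Qed.

Lemma ext_op_surj (T Tt : oprel H H) (Gam0 Gam1 Gamt0 Gamt1 : H -> G)
    (B1 B2 : oprel G G) mu nu :
  linear_op T -> linear_on (dom T) Gam0 -> linear_on (dom T) Gam1 -> linear_op B2 ->
  green_identity T Tt Gam0 Gam1 Gamt0 Gamt1 -> nu^* = mu ->
  (forall h, exists x y, restr_ker T Gam0 x y /\ y - mu *: x = h) ->
  (forall z, (forall phi f, gamma_field Tt Gamt0 nu phi f -> ipG phi z = 0) -> z = 0) ->
  (forall f, exists z,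
      adjoint ipG ipH (gamma_field Tt Gamt0 nu) f z /\
      exists w, B2 z w /\
        ran (id_minus (rcomp B2 (rcomp (weyl T Gam0 Gam1 mu) B1))) w) ->
  forall h, exists x y, ext_op T Gam0 Gam1 B1 B2 x y /\ y - mu *: x = h.
Proof.
move=> linT linG0 linG1 linB2 green nuJ surj tot hyp h.
have [x0 [y0 [A0x0 e0]]] := surj h.
have [z [adjz [w [B2zw [psi [v [[m [[a [B1psia [f1 [[Tf1 Gf1] ->]]]] B2mv]] we]]]]]]] :=
  hyp h.
rewrite -e0 in adjz; have zE := gamma_field_adjoint green nuJ tot A0x0 adjz.
case: A0x0 => Tx0 G0x0.
exists (x0 + f1), (y0 + mu *: f1); split; last first.
  by rewrite scalerDr opprD addrACA subrr addr0.
split; first exact: linear_opD linT Tx0 Tf1.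
have dx0 : dom T x0 by exists y0.
have df1 : dom T f1 by exists (mu *: f1).
exists psi; split.
- rewrite (linear_onD linG1) // -zE.
  by have := linear_opD linB2 B2zw B2mv; rewrite we subrK.
- by rewrite (linear_onD linG0) // G0x0 add0r Gf1.
Qed.

Lemma ext_op_symm (T Tt : oprel H H) (Gam0 Gam1 Gamt0 Gamt1 : H -> G)
    (B1 B2 B1' B2' : oprel G G) :
  green_identity T Tt Gam0 Gam1 Gamt0 Gamt1 ->
  (forall phi psi x y, rcomp B1 B2 phi x -> rcomp B1' B2' psi y ->
     ipG x psi = ipG phi y) ->
  forall f y g k, ext_op T Gam0 Gam1 B1 B2 f y -> ext_op Tt Gamt0 Gamt1 B1' B2' g k ->
    ipH y g = ipH f k.
Proof.
move=> green symB f y g k [Tfy Bf] [Tgk Bg]; have := green _ _ _ _ Tfy Tgk.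
by rewrite (symB _ _ _ _ Bf Bg) subrr => /eqP; rewrite subr_eq0 => /eqP.
Qed.

End BoundaryTriple.

Unset Implicit Arguments.

Theorem theorem4p6
  (R : realType) (H G : lmodType R[i])
  (ipH : H -> H -> R[i]) (ipG : G -> G -> R[i])
  (hilH : is_hilbert ipH) (sepH : separable ipH) (hilG : is_hilbert ipG)
  (* the adjoint pair {S, St} *)
  (S St : oprel H H)
  (linS : linear_op S) (linSt : linear_op St)
  (denseS : dense ipH (dom S)) (denseSt : dense ipH (dom St))
  (closedS : closed_op ipH ipH S) (closedSt : closed_op ipH ipH St)
  (adjpair : forall f g Sf Stg, S f Sf -> St g Stg -> ipH Sf g = ipH f Stg)
  (* cores T of S^* and Tt of St^* *)
  (T Tt : oprel H H) (linT : linear_op T) (linTt : linear_op Tt)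
  (subT : op_sub T (adjoint ipH ipH S)) (subTt : op_sub Tt (adjoint ipH ipH St))
  (coreT : releq (rclosure ipH ipH T) (adjoint ipH ipH S))
  (coreTt : releq (rclosure ipH ipH Tt) (adjoint ipH ipH St))
  (* the boundary maps *)
  (Gam0 Gam1 Gamt0 Gamt1 : H -> G)
  (linG0 : linear_on (dom T) Gam0) (linG1 : linear_on (dom T) Gam1)
  (linGt0 : linear_on (dom Tt) Gamt0) (linGt1 : linear_on (dom Tt) Gamt1)
  (* (G) abstract Green identity *)
  (condG : forall f g Tf Ttg, T f Tf -> Tt g Ttg ->
      ipH Tf g - ipH f Ttg = ipG (Gam1 f) (Gamt0 g) - ipG (Gam0 f) (Gamt1 g))
  (* (D) density of ran Gamma_0 and ran Gammat_0 *)
  (condD : dense ipG (fun phi => exists f, dom T f /\ Gam0 f = phi) /\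
           dense ipG (fun phi => exists g, dom Tt g /\ Gamt0 g = phi))
  (* (M) A_0^* = At_0 and At_0^* = A_0 *)
  (condM : releq (adjoint ipH ipH (restr_ker T Gam0)) (restr_ker Tt Gamt0) /\
           releq (adjoint ipH ipH (restr_ker Tt Gamt0)) (restr_ker T Gam0))
  (rho_ne : exists mu : R[i], in_resolvent ipH (restr_ker T Gam0) mu)
  (* the parameters B1 B2 B1' B2' *)
  (B1 B2 B1' B2' : oprel G G)
  (linB1 : linear_op B1) (linB2 : linear_op B2)
  (linB1' : linear_op B1') (linB2' : linear_op B2')
  (symB : forall phi psi x y, rcomp B1 B2 phi x -> rcomp B1' B2' psi y ->
      ipG x psi = ipG phi y)
  (l : R[i]) (hl : in_resolvent ipH (restr_ker T Gam0) l)
  (h1 : forall f : H, exists z : G,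
      adjoint ipG ipH (gamma_field Tt Gamt0 l^*) f z /\
      exists w, B2 z w /\
        ran (id_minus (rcomp B2 (rcomp (weyl T Gam0 Gam1 l) B1))) w)
  (h2 : forall g : H, exists z : G,
      adjoint ipG ipH (gamma_field T Gam0 l) g z /\
      exists w, B2' z w /\
        ran (id_minus (rcomp B2' (rcomp (weyl Tt Gamt0 Gamt1 l^*) B1'))) w) :
  releq (ext_op T Gam0 Gam1 B1 B2)
        (adjoint ipH ipH (ext_op Tt Gamt0 Gamt1 B1' B2')) /\
  closed_op ipH ipH (ext_op T Gam0 Gam1 B1 B2) /\
  in_resolvent ipH (ext_op T Gam0 Gam1 B1 B2) l.
Proof.
have [ipH_inner ipH_complete] := hilH; have ipG_inner := hilG.1.
case: condD => ranT0_dense ranTt0_dense; case: condM => A0_adj At0_adj.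
have A0_surj : forall h, exists x y, restr_ker T Gam0 x y /\ y - l *: x = h.
  by case: hl.
have At0_surj : forall h, exists g k, restr_ker Tt Gamt0 g k /\ k - l^* *: g = h.
  have A0_reflexive : op_sub (adjoint ipH ipH (adjoint ipH ipH (restr_ker T Gam0)))
                             (restr_ker T Gam0).
    by move=> x y /(adjoint_releq ipH A0_adj x y) /At0_adj.
  move=> h; have [g [k [adj_gk e]]] := adjoint_resolvent_surj ipH_inner ipH_complete hl
    A0_reflexive h.
  by exists g, k; split=> //; apply/A0_adj.
have AB_surj := ext_op_surj ipH_inner ipG_inner linT linG0 linG1 linB2 condG (conjCK l)
  A0_surj (gamma_field_total ipG_inner linTt linGt0 At0_surj ranTt0_dense) h1.
have AtB_surj := ext_op_surj ipH_inner ipG_inner linTt linGt0 linGt1 linB2'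
  (green_identity_sym ipH_inner ipG_inner condG) (erefl l^*) At0_surj
  (gamma_field_total ipG_inner linT linG0 A0_surj ranT0_dense) h2.
move: (ext_op_symm condG symB) => AB_symm.
split; first exact (adjoint_pair_eq ipH_inner AB_symm AB_surj AtB_surj).
split; first exact (adjoint_pair_closed ipH_inner AB_symm AB_surj AtB_surj).
apply: (adjoint_pair_resolvent ipH_inner AB_symm AB_surj AtB_surj ipH_complete).
by move=> x y1 y2 [Ty1 _] [Ty2 _]; case: linT => T_sv _ _; apply: T_sv Ty1 Ty2.
Qed.
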